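(* Suppose Assumptions 1 and 2 hold, let $J_0\in B(\mathbb{S}_+^n(\gamma))$ be a constant function, and let $J_k=T^kJ_0$, $\bar J_k=\bar T^kJ_0$, $\hat J_k=\hat T^kJ_0$. Then for every $k=0,1,2,\dots$ and every $P\in\mathbb{S}_+^n(\gamma)$, $J_k(P)\le\bar J_k(P)\le\hat J_k(P)$.
   Context: Fix positive integers $n,m$. Let $A\in\mathbb{R}^{n\times n}$ be Schur stable (every eigenvalue has modulus $<1$), $W\in\mathbb{R}^{n\times n}$ symmetric positive definite, $C\in\mathbb{R}^{m\times n}$ (the $i$-th row corresponds to sensor $i$), and $V\in\mathbb{R}^{m\times m}$ symmetric positive definite. For $S\subseteq\{1,\dots,m\}$, $C_S$ is the submatrix of $C$ formed by the rows indexed by $S$ and $V_S$ the principal submatrix of $V$ with rows and columns indexed by $S$ (with $C_S^\top V_S^{-1}C_S:=0$ when $S=\emptyset$). For $P\succeq 0$ define $f(P,S)=\big((APA^\top+W)^{-1}+C_S^\top V_S^{-1}C_S\big)^{-1}$. Let $g:2^{\{1,\dots,m\}}\to[0,\infty)$ and $c(P,S)=\mathrm{Tr}(P)+g(S)$. Fix a discount factor $0\le\beta<1$ and $\gamma>0$. Let $\mathbb{S}_+^n$ be the $n\times n$ positive semidefinite matrices and $\mathbb{S}_+^n(\gamma)=\{P\in\mathbb{S}_+^n:\mathrm{Tr}(P)\le\gamma\}$. $B(\mathbb{S}_+^n(\gamma))$ is the set of functions $J:\mathbb{S}_+^n(\gamma)\to\mathbb{R}$ with $\|J\|_\infty:=\sup_{P\in\mathbb{S}_+^n(\gamma)}|J(P)|<\infty$.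 Convention: every $J\in B(\mathbb{S}_+^n(\gamma))$ is evaluated as $J(Q)=+\infty$ for $Q\succeq0$ with $\mathrm{Tr}(Q)>\gamma$; minima over $S$ range over all $S\subseteq\{1,\dots,m\}$. Fix a resolution $\epsilon>0$. Let $\mathbb{M}=\{\epsilon P: P\in\mathbb{Z}^{n\times n}\text{ symmetric},\,P\succeq0\}$ and $\mathbb{M}(\gamma)=\{\hat P\in\mathbb{M}:\mathrm{Tr}(\hat P)\le\gamma\}$. Define $\Theta(P)=\epsilon\,\mathrm{round}(P/\epsilon)+\epsilon nI$ (entrywise rounding to the nearest integer) and $\Omega(P)=P+2\epsilon nI$. Operators: $(TJ)(P)=\min_S\{c(P,S)+\beta J(f(P,S))\}$, $(\bar TJ)(P)=\min_S\{c(P,S)+\beta J(\Theta(f(P,S)))\}$, $(\hat TJ)(P)=\min_S\{c(P,S)+\beta J(\Omega(f(P,S)))\}$ for $P\in\mathbb{S}_+^n(\gamma)$. Assumption 1: there exists $\pi:\mathbb{S}_+^n(\gamma)\to2^{\{1,\dots,m\}}$ with $f(P,\pi(P))\in\mathbb{S}_+^n(\gamma)$ for all $P\in\mathbb{S}_+^n(\gamma)$. Assumption 2: for each $P\in\mathbb{S}_+^n(\gamma)$ there exists $S\subseteq\{1,\dots,m\}$ with $\Omega(f(P,S))\in\mathbb{M}(\gamma)$. *)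

From mathcomp Require Import all_boot all_order all_algebra.
From mathcomp Require Import boolp reals constructive_ereal.
From mathcomp Require Import complex.

Set Implicit Arguments.
Unset Strict Implicit.
Unset Printing Implicit Defensive.

Import Order.TTheory GRing.Theory Num.Theory.
Local Open Scope ring_scope.

Section Defs.
Variable R : realType.

Definition psd (n : nat) (P : 'M[R]_n) : Prop :=
  P^T = P /\ forall x : 'cV[R]_n, 0 <= (x^T *m P *m x) 0 0.

Definition pd (n : nat) (P : 'M[R]_n) : Prop :=
  P^T = P /\ forall x : 'cV[R]_n, x != 0 -> 0 < (x^T *m P *m x) 0 0.

Definition schur_stable (n : nat) (A : 'M[R]_n) : Prop :=
  forall z : R[i], eigenvalue (map_mx (fun x : R => (x%:C)%C) A) z -> `|z| < 1.

Definition inSg (n : nat) (gamma : R) (P : 'M[R]_n) : Prop :=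
  psd P /\ \tr P <= gamma.

(* C_S : rows of C indexed by S (in increasing order) *)
Definition subC (n m : nat) (C : 'M[R]_(m, n)) (S : {set 'I_m}) : 'M[R]_(#|S|, n) :=
  \matrix_(i < #|S|, j < n) C (enum_val i) j.

Definition subV (m : nat) (V : 'M[R]_m) (S : {set 'I_m}) : 'M[R]_(#|S|) :=
  \matrix_(i < #|S|, j < #|S|) V (enum_val i) (enum_val j).

(* f(P,S); for S = set0 the correction term is the 0 x 0 product, i.e. 0 *)
Definition fK (n m : nat) (A W : 'M[R]_n) (C : 'M[R]_(m, n)) (V : 'M[R]_m)
  (P : 'M[R]_n) (S : {set 'I_m}) : 'M[R]_n :=
  invmx (invmx (A *m P *m A^T + W)
         + (subC C S)^T *m invmx (subV V S) *m subC C S).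

Definition cost (n m : nat) (g : {set 'I_m} -> R) (P : 'M[R]_n) (S : {set 'I_m}) : R :=
  \tr P + g S.

Definition roundR (x : R) : R := (Num.floor (x + 1 / 2))%:~R.

Definition Theta (n : nat) (eps : R) (P : 'M[R]_n) : 'M[R]_n :=
  eps *: map_mx (fun x => roundR (x / eps)) P + (eps * n%:R)%:M.

Definition Omega (n : nat) (eps : R) (P : 'M[R]_n) : 'M[R]_n :=
  P + (2 * eps * n%:R)%:M.

Definition inMg (n : nat) (eps gamma : R) (Q : 'M[R]_n) : Prop :=
  (exists Z : 'M[int]_n, Z^T = Z /\ psd (map_mx (fun z : int => z%:~R : R) Z)
     /\ Q = eps *: map_mx (fun z : int => z%:~R : R) Z)
  /\ \tr Q <= gamma.

(* Generic Bellman operator with post-processing phi (id, Theta or Omega):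
   (B J)(P) = min_S { c(P,S) + beta J(phi(f(P,S))) },
   with the convention J(Q) = +oo when Q is not in S_+^n(gamma). *)
Definition bellman (n m : nat) (A W : 'M[R]_n) (C : 'M[R]_(m, n)) (V : 'M[R]_m)
  (g : {set 'I_m} -> R) (beta gamma : R) (phi : 'M[R]_n -> 'M[R]_n)
  (J : 'M[R]_n -> \bar R) (P : 'M[R]_n) : \bar R :=
  \big[Order.min/+oo%E]_(S : {set 'I_m})
    (if `[< inSg gamma (phi (fK A W C V P S)) >]
     then ((cost g P S)%:E + beta%:E * J (phi (fK A W C V P S)))%E
     else +oo%E).

End Defs.

From mathcomp Require Import all_boot all_order all_algebra.
From mathcomp Require Import boolp reals constructive_ereal.
From mathcomp Require Import complex.
From mathcomp Require Import ring lra.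

(* We work in the Loewner order  X ≼ Y  (Y - X positive semidefinite) and say
   that J is dominated by J' when  J X <= J' Y  whenever X ≼ Y in S_+^n(gamma).
   The central lemma [bellman_dominates] states that domination is propagated
   by Bellman operators whose post-processing maps phi1, phi2 are compatible,
   i.e. phi1 X is psd and phi1 X ≼ phi2 Y whenever 0 ≼ X ≼ Y.  It rests on
   - elementary Loewner-order facts, notably that inversion is antitone on
     positive definite matrices ([invmx_antitone]);
   - monotonicity of the Riccati map P |-> f(P,S) ([fK_monotone]);
   - the rounding estimates X ≼ Theta X ≼ Omega X, which follow from the fact
     that n I + E is psd when E is symmetric with entries in [-1,1].
   The pairs (id, Theta) and (Theta, Omega) are compatible, so an induction on
   k starting from the constant J0 gives both inequalities (take X = Y = P). *)

Set Implicit Arguments.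
Unset Strict Implicit.
Unset Printing Implicit Defensive.
Import Order.TTheory GRing.Theory Num.Theory.
Local Open Scope ring_scope.

Local Notation "X ≼ Y" := (psd (Y - X)) (at level 70, no associativity).

Lemma bigmin_le (R : realType) (I : finType) (a b : I -> \bar R) :
  (forall i, (a i <= b i)%E) ->
  (\big[Order.min/+oo%E]_i a i <= \big[Order.min/+oo%E]_i b i)%E.
Proof.
move=> h; apply: (big_ind2 (fun x y : \bar R => (x <= y)%E)) => //.
by move=> x1 x2 y1 y2; apply: le_min2.
Qed.

Lemma mul_bounded_ge (R : realType) (a b e : R) :
  -1 <= e -> e <= 1 -> - ((a ^+ 2 + b ^+ 2) / 2) <= a * e * b.
Proof.
move=> e_ge e_le.
have sum_sq : 0 <= (1 + e) * (a + b) ^+ 2 by apply: mulr_ge0; [lra | apply: sqr_ge0].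
have dif_sq : 0 <= (1 - e) * (a - b) ^+ 2 by apply: mulr_ge0; [lra | apply: sqr_ge0].
have -> : a * e * b =
    ((1 + e) * (a + b) ^+ 2 + (1 - e) * (a - b) ^+ 2) / 4 - (a ^+ 2 + b ^+ 2) / 2.
  by rewrite !expr2; field.
lra.
Qed.

Definition qform (R : realType) (n : nat) (M : 'M[R]_n) (u v : 'cV[R]_n) : R :=
  (u^T *m M *m v) 0 0.

Section Loewner.
Variables (R : realType) (n : nat).
Implicit Types (M N P Q X Y Z : 'M[R]_n) (u v w x : 'cV[R]_n).

Lemma qform_trmx M u v : qform M u v = qform M^T v u.
Proof.
have tr11 (B : 'M[R]_1) : B 0 0 = B^T 0 0 by rewrite mxE.
by rewrite /qform tr11 !trmx_mul trmxK mulmxA.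
Qed.

Lemma mxentryB k l (B1 B2 : 'M[R]_(k, l)) i j : (B1 - B2) i j = B1 i j - B2 i j.
Proof. by rewrite !mxE. Qed.

Lemma qformBl M u w v : qform M (u - w) v = qform M u v - qform M w v.
Proof. by rewrite /qform linearB /= !mulmxBl mxentryB. Qed.

Lemma qformBr M u v w : qform M u (v - w) = qform M u v - qform M u w.
Proof. by rewrite /qform mulmxBr mxentryB. Qed.

Lemma qformDM M N u v : qform (M + N) u v = qform M u v + qform N u v.
Proof. by rewrite /qform mulmxDr mulmxDl mxE. Qed.

Lemma qformBM M N u v : qform (M - N) u v = qform M u v - qform N u v.
Proof. by rewrite /qform mulmxBr mulmxBl mxentryB. Qed.

Lemma qformZM (a : R) M u v : qform (a *: M) u v = a * qform M u v.
Proof. by rewrite /qform -scalemxAr -scalemxAl mxE. Qed.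

Lemma qform_congr k (B : 'M[R]_(k, n)) M (u v : 'cV[R]_k) :
  qform (B *m M *m B^T) u v = qform M (B^T *m u) (B^T *m v).
Proof. by rewrite /qform trmx_mul trmxK !mulmxA. Qed.

Lemma qform_mulinv M u x : M \in unitmx -> qform M u (invmx M *m x) = (u^T *m x) 0 0.
Proof. by move=> Mu; rewrite /qform -mulmxA (mulmxA M) (mulmxV Mu) mul1mx. Qed.

Lemma qform_sum M x : qform M x x = \sum_i \sum_j x i 0 * M i j * x j 0.
Proof.
rewrite /qform mxE; under eq_bigr do rewrite mxE big_distrl.
rewrite exchange_big; apply: eq_bigr => i _; apply: eq_bigr => j _.
by rewrite mxE.
Qed.

Lemma qform_scalar (a : R) x : qform a%:M x x = a * \sum_i x i 0 ^+ 2.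
Proof.
rewrite /qform mul_mx_scalar -scalemxAl mxE mxE; congr (_ * _).
by apply: eq_bigr => i _; rewrite mxE expr2.
Qed.

Lemma psd0 : psd (0 : 'M[R]_n).
Proof. by split=> [|x]; rewrite ?trmx0 // mulmx0 mul0mx mxE. Qed.

Lemma psdD M N : psd M -> psd N -> psd (M + N).
Proof.
move=> [sM qM] [sN qN]; split=> [|x]; first by rewrite linearD /= sM sN.
by have := qformDM M N x x; rewrite /qform => ->; apply: addr_ge0.
Qed.

Lemma psdZ (a : R) M : 0 <= a -> psd M -> psd (a *: M).
Proof.
move=> a_ge0 [sM qM]; split=> [|x]; first by rewrite linearZ /= sM.
by have := qformZM a M x x; rewrite /qform => ->; apply: mulr_ge0.
Qed.

Lemma psd_congr k (B : 'M[R]_(k, n)) M : psd M -> psd (B *m M *m B^T).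
Proof.
move=> [sM qM]; split=> [|x]; first by rewrite !trmx_mul trmxK sM mulmxA.
by have := qform_congr B M x x; rewrite /qform => ->.
Qed.

Lemma pd_congr k (B : 'M[R]_(k, n)) M :
  pd M -> (forall x : 'cV[R]_k, x != 0 -> B^T *m x != 0) -> pd (B *m M *m B^T).
Proof.
move=> [sM qM] B_inj; split=> [|x]; first by rewrite !trmx_mul trmxK sM mulmxA.
by move=> /B_inj /qM; have := qform_congr B M x x; rewrite /qform => ->.
Qed.

Lemma pd_psd M : pd M -> psd M.
Proof.
move=> [sM qM]; split=> // x; have [->|/qM/ltW //] := eqVneq x 0.
by rewrite mulmx0 mxE.
Qed.

Lemma pdD M N : pd M -> psd N -> pd (M + N).
Proof.
move=> [sM qM] [sN qN]; split=> [|x]; first by rewrite linearD /= sM sN.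
by move=> /qM qMx; have := qformDM M N x x; rewrite /qform => ->; apply: ltr_wpDr.
Qed.

Lemma pd_unit M : pd M -> M \in unitmx.
Proof.
move=> [sM qM]; rewrite unitmxE unitfE; apply/negP => /det0P [v v0 vM].
have : v^T != 0 by rewrite trmx_eq0.
by move/qM; rewrite trmxK vM mul0mx mxE ltxx.
Qed.

Lemma pd_inv M : pd M -> pd (invmx M).
Proof.
move=> pdM; have Mu := pd_unit pdM; case: pdM => sM qM.
split=> [|x x_neq0]; first by rewrite trmx_inv sM.
have y_neq0 : invmx M *m x != 0.
  apply: contra x_neq0 => /eqP y0; apply/eqP.
  by rewrite -[x]mul1mx -(mulmxV Mu) -mulmxA y0 mulmx0.
have := qM _ y_neq0; rewrite trmx_mul trmx_inv sM.
by rewrite -!mulmxA [M *m (_ *m x)]mulmxA (mulmxV Mu) mul1mx mulmxA.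
Qed.

Lemma loewner_trans X Y Z : X ≼ Y -> Y ≼ Z -> X ≼ Z.
Proof. by move=> XY YZ; rewrite -(subrK Y Z) -addrA; apply: psdD. Qed.

Lemma psd_loewner X Y : psd X -> X ≼ Y -> psd Y.
Proof. by move=> pX XY; rewrite -(subrK X Y); apply: psdD. Qed.

(* Matrix inversion reverses the Loewner order on positive definite matrices:
   with y = Q^-1 x and z = P^-1 x, expand  0 <= (y - z)' P (y - z)  and use
   y' P y <= y' Q y = x' Q^-1 x. *)
Lemma invmx_antitone P Q : pd P -> pd Q -> P ≼ Q -> invmx Q ≼ invmx P.
Proof.
move=> pdP pdQ [_ qQP].
have [Pu Qu] := (pd_unit pdP, pd_unit pdQ).
have [[sP _] [sQ _]] := (pdP, pdQ).
have [[siP _] [siQ _]] := (pd_inv pdP, pd_inv pdQ).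
split; first by rewrite linearB /= siP siQ.
move=> x; change (0 <= qform (invmx P - invmx Q) x x).
set y := invmx Q *m x; set z := invmx P *m x.
have Pyz : qform P y z = qform (invmx Q) x x.
  by rewrite /z qform_mulinv // /y trmx_mul siQ.
have Pzy : qform P z y = qform P y z by rewrite qform_trmx sP.
have Pzz : qform P z z = qform (invmx P) x x.
  by rewrite /z qform_mulinv // trmx_mul siP.
have Qyy : qform Q y y = qform (invmx Q) x x.
  by rewrite {2}/y qform_mulinv // /y trmx_mul siQ.
have P_yz : 0 <= qform P (y - z) (y - z) := (pd_psd pdP).2 (y - z).
have QP_y : 0 <= qform (Q - P) y y := qQP y.
rewrite qformBl !qformBr Pzy Pyz Pzz in P_yz.
rewrite qformBM Qyy in QP_y.
rewrite qformBM; lra.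
Qed.

Lemma psd_tr M : psd M -> 0 <= \tr M.
Proof.
move=> [_ qM]; apply: sumr_ge0 => i _.
by have := qM (delta_mx i 0); rewrite trmx_delta -rowE -colE !mxE.
Qed.

Lemma tr_monotone X Y : X ≼ Y -> \tr X <= \tr Y.
Proof. by move/psd_tr; rewrite linearB /= subr_ge0. Qed.

Lemma inSg_loewner (gamma : R) X Y : psd X -> X ≼ Y -> inSg gamma Y -> inSg gamma X.
Proof. by move=> pX XY [_ trY]; split=> //; apply: le_trans trY; apply: tr_monotone. Qed.

(* n I + E is psd for every symmetric E with entries in [-1, 1]: entrywise,
   x' E x >= - sum_ij (x_i^2 + x_j^2)/2 = - n |x|^2. *)
Lemma psd_scalar_add_bounded (E : 'M[R]_n) :
  E^T = E -> (forall i j, `|E i j| <= 1) -> psd (n%:R%:M + E).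
Proof.
move=> sE bE; split=> [|x]; first by rewrite linearD /= tr_scalar_mx sE.
change (0 <= qform (n%:R%:M + E) x x); rewrite qformDM qform_scalar qform_sum.
set S := \sum_i x i 0 ^+ 2.
have lower : - (\sum_i \sum_j ((x i 0 ^+ 2 + x j 0 ^+ 2) / 2)) <=
             \sum_i \sum_j x i 0 * E i j * x j 0.
  rewrite -sumrN; apply: ler_sum => i _; rewrite -sumrN; apply: ler_sum => j _.
  by have := bE i j; rewrite ler_norml => /andP [? ?]; apply: mul_bounded_ge.
have row_sum i : \sum_j ((x i 0 ^+ 2 + x j 0 ^+ 2) / 2) = (n%:R * x i 0 ^+ 2 + S) / 2.
  by rewrite -mulr_suml big_split /= sumr_const card_ord mulr_natl.
have total : \sum_i \sum_j ((x i 0 ^+ 2 + x j 0 ^+ 2) / 2) = n%:R * S.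
  rewrite (eq_bigr _ (fun i _ => row_sum i)) -mulr_suml big_split /= -mulr_sumr.
  by rewrite sumr_const card_ord -/S -[S *+ n]mulr_natl; field.
have S_ge0 : 0 <= S by apply: sumr_ge0 => i _; apply: sqr_ge0.
rewrite total in lower; lra.
Qed.

End Loewner.

Section Riccati.
Variables (R : realType) (n m : nat).
Variables (A W : 'M[R]_n) (C : 'M[R]_(m, n)) (V : 'M[R]_m).
Hypotheses (pdW : pd W) (pdV : pd V).

Definition selection (S : {set 'I_m}) : 'M[R]_(m, #|S|) :=
  \matrix_(i, k) (i == enum_val k)%:R.

Lemma subV_selection (S : {set 'I_m}) : subV V S = (selection S)^T *m V *m selection S.
Proof.
apply/matrixP => k l; rewrite !mxE.
rewrite (bigD1 (enum_val l)) //= big1 ?addr0; last first.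
  by move=> j /negPf jl; rewrite !mxE jl mulr0.
rewrite !mxE eqxx mulr1 (bigD1 (enum_val k)) //= big1 ?addr0; last first.
  by move=> j /negPf jk; rewrite !mxE jk mul0r.
by rewrite !mxE eqxx mul1r.
Qed.

Lemma selection_inj (S : {set 'I_m}) (x : 'cV[R]_#|S|) : x != 0 -> selection S *m x != 0.
Proof.
apply: contra => /eqP Ex0; apply/eqP/matrixP => k o.
rewrite (ord1 o) mxE; have := congr1 (fun M : 'M[R]_(m, 1) => M (enum_val k) 0) Ex0.
rewrite !mxE (bigD1 k) //= big1 ?addr0; first by rewrite mxE eqxx mul1r.
move=> j jk; rewrite mxE (inj_eq enum_val_inj).
by rewrite eq_sym (negPf jk) mul0r.
Qed.

Lemma subV_pd (S : {set 'I_m}) : pd (subV V S).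
Proof.
rewrite subV_selection -{2}[selection S]trmxK; apply: pd_congr => // x.
by rewrite trmxK; apply: selection_inj.
Qed.

Lemma information_psd (S : {set 'I_m}) : psd ((subC C S)^T *m invmx (subV V S) *m subC C S).
Proof.
rewrite -{2}[subC C S]trmxK; apply: psd_congr.
exact/pd_psd/pd_inv/subV_pd.
Qed.

Lemma prediction_pd P : psd P -> pd (A *m P *m A^T + W).
Proof. by move=> pP; rewrite addrC; apply: pdD => //; apply: psd_congr. Qed.

Lemma fK_pd P S : psd P -> pd (fK A W C V P S).
Proof.
move=> pP; apply/pd_inv/pdD; last exact: information_psd.
exact/pd_inv/prediction_pd.
Qed.

(* The Riccati map is monotone: it is the composite of P |-> A P A' + W and
   two antitone inversions. *)
Lemma fK_monotone P Q S :
  psd P -> psd Q -> P ≼ Q -> fK A W C V P S ≼ fK A W C V Q S.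
Proof.
move=> pP pQ PQ; have info := information_psd S.
apply: invmx_antitone; try exact/pdD/info/pd_inv/prediction_pd.
rewrite opprD addrACA subrr addr0.
apply: invmx_antitone; try exact: prediction_pd.
by rewrite opprD addrACA subrr addr0 -mulmxBl -mulmxBr; apply: psd_congr.
Qed.

End Riccati.

Section Bellman.
Variables (R : realType) (n m : nat).
Variables (A W : 'M[R]_n) (C : 'M[R]_(m, n)) (V : 'M[R]_m).
Variables (g : {set 'I_m} -> R) (beta gamma : R).
Hypotheses (pdW : pd W) (pdV : pd V) (beta_ge0 : 0 <= beta).

Definition dominated (J J' : 'M[R]_n -> \bar R) : Prop :=
  forall X Y, inSg gamma X -> inSg gamma Y -> X ≼ Y -> (J X <= J' Y)%E.

Definition compatible (phi1 phi2 : 'M[R]_n -> 'M[R]_n) : Prop :=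
  forall X Y, psd X -> X ≼ Y -> psd (phi1 X) /\ phi1 X ≼ phi2 Y.

Lemma bellman_term_le (P1 P2 X1 X2 : 'M[R]_n) S (J1 J2 : 'M[R]_n -> \bar R) :
  (inSg gamma X2 -> [/\ inSg gamma X1, \tr P1 <= \tr P2 & (J1 X1 <= J2 X2)%E]) ->
  ((if `[< inSg gamma X1 >] then ((cost g P1 S)%:E + beta%:E * J1 X1)%E else +oo%E)
   <= (if `[< inSg gamma X2 >] then ((cost g P2 S)%:E + beta%:E * J2 X2)%E else +oo%E))%E.
Proof.
move=> h; have [X2g|] := asboolP (inSg gamma X2); last by rewrite leey.
have [X1g trP J12] := h X2g; rewrite asboolT //.
apply: leeD; first by rewrite lee_fin /cost lerD2r.
by apply: lee_wpmul2l => //; rewrite lee_fin.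
Qed.

Lemma bellman_dominates phi1 phi2 J J' :
  compatible phi1 phi2 -> dominated J J' ->
  dominated (bellman A W C V g beta gamma phi1 J) (bellman A W C V g beta gamma phi2 J').
Proof.
move=> phi12 JJ' P Q [pP _] [pQ _] PQ.
apply: bigmin_le => S; apply: bellman_term_le => phi2g.
have f_mono := fK_monotone A C pdW pdV S pP pQ PQ.
have [phi1p phi1_le] := phi12 _ _ (pd_psd (fK_pd A C pdW pdV S pP)) f_mono.
have phi1g := inSg_loewner phi1p phi1_le phi2g.
by split=> //; [apply: tr_monotone | apply: JJ'].
Qed.

End Bellman.

Section Rounding.
Variables (R : realType) (n : nat) (eps : R).
Hypothesis eps_gt0 : 0 < eps.
Implicit Types X Y : 'M[R]_n.

Lemma roundR_err (y : R) : `|roundR y - y| <= 1.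
Proof.
rewrite /roundR; have := floor_itv (y + 1 / 2).
rewrite intrD /= => /andP [lo hi].
by rewrite ler_norml; apply/andP; split; lra.
Qed.

Definition residual (X : 'M[R]_n) : 'M[R]_n :=
  map_mx (fun x => roundR (x / eps) - x / eps) X.

Lemma residual_trmx X : X^T = X -> (residual X)^T = residual X.
Proof.
move=> sX; apply/matrixP => i j; rewrite !mxE.
by have -> : X j i = X i j by rewrite -{1}sX mxE.
Qed.

Lemma residual_bound X i j : `|residual X i j| <= 1.
Proof. by rewrite mxE roundR_err. Qed.

Lemma Theta_subE X : Theta eps X - X = eps *: (n%:R%:M + residual X).
Proof.
apply/matrixP => i j; rewrite !mxE.
by case: (i == j); rewrite /= ?mulr1n ?mulr0n; field; rewrite gt_eqF.
Qed.

Lemma Omega_sub_ThetaE X : Omega eps X - Theta eps X = eps *: (n%:R%:M + - residual X).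
Proof.
apply/matrixP => i j; rewrite !mxE.
by case: (i == j); rewrite /= ?mulr1n ?mulr0n; field; rewrite gt_eqF.
Qed.

Lemma Theta_ge X : X^T = X -> X ≼ Theta eps X.
Proof.
move=> sX; rewrite Theta_subE; apply: psdZ; first exact: ltW.
by apply: psd_scalar_add_bounded; [exact: residual_trmx | exact: residual_bound].
Qed.

Lemma Theta_le_Omega X : X^T = X -> Theta eps X ≼ Omega eps X.
Proof.
move=> sX; rewrite Omega_sub_ThetaE; apply: psdZ; first exact: ltW.
apply: psd_scalar_add_bounded; first by rewrite linearN /= residual_trmx.
by move=> i j; rewrite mxE normrN residual_bound.
Qed.

(* Omega is a translation, so it preserves the Loewner order. *)
Lemma Omega_sub X Y : Omega eps Y - Omega eps X = Y - X.
Proof. by rewrite /Omega opprD addrACA subrr addr0. Qed.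

(* The exact map is dominated by rounding: X ≼ Y ≼ Theta Y. *)
Lemma compatible_id_Theta : compatible (n := n) id (Theta eps).
Proof.
move=> X Y pX XY; split=> //.
exact: loewner_trans XY (Theta_ge (psd_loewner pX XY).1).
Qed.

(* Rounding is dominated by Omega: Theta X ≼ Omega X ≼ Omega Y. *)
Lemma compatible_Theta_Omega : compatible (n := n) (Theta eps) (Omega eps).
Proof.
move=> X Y pX XY; split; first exact: psd_loewner pX (Theta_ge pX.1).
by apply: loewner_trans (Theta_le_Omega pX.1) _; rewrite Omega_sub.
Qed.

End Rounding.

Theorem proposition3 (R : realType) (n m : nat)
  (A W : 'M[R]_n) (C : 'M[R]_(m, n)) (V : 'M[R]_m)
  (g : {set 'I_m} -> R) (beta gamma eps c0 : R) :
  (0 < n)%N -> (0 < m)%N ->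
  schur_stable A -> pd W -> pd V ->
  (forall S, 0 <= g S) ->
  0 <= beta -> beta < 1 -> 0 < gamma -> 0 < eps ->
  (* Assumption 1 *)
  (exists pi : 'M[R]_n -> {set 'I_m},
     forall P, inSg gamma P -> inSg gamma (fK A W C V P (pi P))) ->
  (* Assumption 2 *)
  (forall P, inSg gamma P ->
     exists S, inMg eps gamma (Omega eps (fK A W C V P S))) ->
  let J0 := fun _ : 'M[R]_n => (c0%:E : \bar R) in
  let T := bellman A W C V g beta gamma id in
  let Tbar := bellman A W C V g beta gamma (Theta eps) in
  let That := bellman A W C V g beta gamma (Omega eps) in
  forall (k : nat) (P : 'M[R]_n), inSg gamma P ->
    (iter k T J0 P <= iter k Tbar J0 P)%E /\
    (iter k Tbar J0 P <= iter k That J0 P)%E.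
Proof.
move=> _ _ _ pdW pdV _ beta_ge0 _ _ eps_gt0 _ _ J0 T Tbar That k P Pg.
suff [T_Tbar Tbar_That] : dominated gamma (iter k T J0) (iter k Tbar J0) /\
                          dominated gamma (iter k Tbar J0) (iter k That J0).
  have PP : P ≼ P by rewrite subrr; apply: psd0.
  by split; [apply: T_Tbar | apply: Tbar_That].
elim: k => [|k [T_Tbar Tbar_That]] /=; first by split=> X Y *; apply: lexx.
split; apply: bellman_dominates => //.
- exact: compatible_id_Theta.
- exact: compatible_Theta_Omega.
Qed.
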